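(* Let $\mathbf D$ be a regular $2^r$-run design given by distinct $b_1,\dots,b_n\in\Delta_r$ with $\operatorname{rank}(b_1,\dots,b_n)=r$, $n\ge 4$. Then there are constants $c_1,c_2,c_3$ depending only on $n$ and $r$ (not on the particular design) such that: (a) $A^{(1)}_3=c_1-A_3(\widetilde T)$; (b) $A^{(1)}_4=c_2+A_3(\widetilde T)+A_4(\widetilde T)$; (c) if moreover $b_1,b_2,b_3,b_4$ are linearly independent and $b_1+b_2\notin\{b_5,\dots,b_n\}$, $b_3+b_4\notin\{b_5,\dots,b_n\}$, then $A^{(2)}_2=c_3+A^{(12)}_2(T_{12})+A^{(34)}_2(T_{34})$.
   Context: $\Delta_r$ is the set of nonzero vectors of $\mathrm{GF}(2)^r$ (all arithmetic mod 2). ''Number of $m$-subsets of a list with sum in $S$'' counts $m$-element subsets of the listed (distinct) vectors whose sum lies in $S$. $A^{(1)}_m$: number of $m$-subsets of $\{b_2,b_4,b_5,\dots,b_n\}$ with sum $0$. $A^{(21)}_m$: $m$-subsets of $\{b_4,\dots,b_n\}$ with sum in $\{b_1,b_1+b_2\}$; $A^{(22)}_m$: $m$-subsets of $\{b_2,b_5,\dots,b_n\}$ with sum in $\{b_3,b_3+b_4\}$; $A^{(2)}_m=A^{(21)}_m+A^{(22)}_m$. $\widetilde T=\Delta_r\setminus\{b_2,b_4,b_5,\dots,b_n\}$; $A_m(\widetilde T)$: number of $m$-subsets of $\widetilde T$ with sum $0$. $T_{12}=\widetilde T\setminus\{b_1,b_1+b_2\}$, $T_{34}=\widetilde T\setminus\{b_3,b_3+b_4\}$;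 $A^{(12)}_2(T_{12})$: number of 2-subsets of $T_{12}$ with sum in $\{b_1,b_1+b_2\}$; $A^{(34)}_2(T_{34})$: number of 2-subsets of $T_{34}$ with sum in $\{b_3,b_3+b_4\}$. *)

From HB Require Import structures.
From mathcomp Require Import all_boot all_order all_algebra.
Set Implicit Arguments. Unset Strict Implicit. Unset Printing Implicit Defensive.
Import GRing.Theory.
Local Open Scope ring_scope.

Notation vec r := 'rV['F_2]_r.

Definition Delta (r : nat) : {set vec r} := [set x : vec r | x != 0].

(* { b_lo, ..., b_hi } for a sequence b indexed by nat (1-based as in paper) *)
Definition bset (r : nat) (b : nat -> vec r) (lo hi : nat) : {set vec r} :=
  [set x in map b (index_iota lo hi.+1)].

Definition cnt (r : nat) (S : {set vec r}) (m : nat) (Z : {set vec r}) : nat :=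
  #|[set X : {set vec r} | [&& X \subset S, #|X| == m & \sum_(x in X) x \in Z]]|.

From mathcomp Require Import all_boot all_order all_algebra.
From mathcomp Require Import ring zify.
Set Implicit Arguments. Unset Strict Implicit. Unset Printing Implicit Defensive.
Import GRing.Theory.
Local Open Scope ring_scope.

(* The numbers of zero-sum 3- and 4-subsets of a set A of nonzero vectors of
   GF(2)^r are, up to corrections depending only on |A|, the values at the
   indicator 1_A of the symmetric multilinear forms [form3] and [form4] below.
   For the complement T of S in the nonzero vectors, 1_T = 1 - d_0 - 1_S, and
   expanding the forms by multilinearity turns every mixed term into a
   polynomial in 2^r and |S|: a constant argument factors out a sum and a d_0
   argument drops a summation.  For (c), a 2-subset
   with sum z is a coset {x, x + z}; outside the subgroup {0, a, c, a + c} the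
   cosets of {0, z} split between X and its complement are counted equally
   from both sides. *)

Section SymmetricTrilinear.

Variables (V : zmodType) (R : comPzRingType) (B : V -> V -> V -> R).
Hypothesis B_addl : forall u u' v w, B (u + u') v w = B u v w + B u' v w.
Hypothesis B_sym12 : forall u v w, B u v w = B v u w.
Hypothesis B_sym23 : forall u v w, B u v w = B u w v.

Lemma trilinear_expandD u v :
  B (u + v) (u + v) (u + v) = B u u u + 3 * B u u v + 3 * B u v v + B v v v.
Proof.
have B_addm a b b' c : B a (b + b') c = B a b c + B a b' c.
  by rewrite B_sym12 B_addl -!(B_sym12 a).
have B_addr a b c c' : B a b (c + c') = B a b c + B a b c'.
  by rewrite B_sym23 B_addm -!(B_sym23 a b).
rewrite B_addl !B_addm !B_addr.
rewrite [B u v u]B_sym23 [B v u u]B_sym12 [B u v u]B_sym23.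
rewrite [B v u v]B_sym12 [B v v u]B_sym23 [B v u v]B_sym12.
ring.
Qed.

Lemma trilinear_expandB u v :
  B (u - v) (u - v) (u - v) = B u u u - 3 * B u u v + 3 * B u v v - B v v v.
Proof.
have B0 b c : B 0 b c = 0 by apply: (addrI (B 0 b c)); rewrite -B_addl !addr0.
have B_oppl a b c : B (- a) b c = - B a b c.
  by apply/eqP; rewrite -addr_eq0 -B_addl addNr B0.
have B_oppm a b c : B a (- b) c = - B a b c by rewrite B_sym12 B_oppl B_sym12.
have B_oppr a b c : B a b (- c) = - B a b c by rewrite B_sym23 B_oppm B_sym23.
rewrite trilinear_expandD !B_oppl !B_oppm !B_oppr; ring.
Qed.

End SymmetricTrilinear.

Section SymmetricQuadrilinear.

Variables (V : zmodType) (R : comPzRingType) (Q : V -> V -> V -> V -> R).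
Hypothesis Q_addl : forall u u' v w x, Q (u + u') v w x = Q u v w x + Q u' v w x.
Hypothesis Q_sym12 : forall u v w x, Q u v w x = Q v u w x.
Hypothesis Q_sym23 : forall u v w x, Q u v w x = Q u w v x.
Hypothesis Q_sym34 : forall u v w x, Q u v w x = Q u v x w.

Lemma quadrilinear_expandD u v :
  Q (u + v) (u + v) (u + v) (u + v) =
  Q u u u u + 4 * Q u u u v + 6 * Q u u v v + 4 * Q u v v v + Q v v v v.
Proof.
have Q_addm a b b' c d : Q a (b + b') c d = Q a b c d + Q a b' c d.
  by rewrite Q_sym12 Q_addl -!(Q_sym12 a).
have expand a := trilinear_expandD (Q_addm a) (Q_sym23 a) (Q_sym34 a).
rewrite Q_addl !expand.
rewrite [Q v u u u]Q_sym12 [Q u v u u]Q_sym23 [Q u u v u]Q_sym34.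
rewrite [Q v u u v]Q_sym12 [Q u v u v]Q_sym23 [Q v u v v]Q_sym12.
ring.
Qed.

Lemma quadrilinear_expandB u v :
  Q (u - v) (u - v) (u - v) (u - v) =
  Q u u u u - 4 * Q u u u v + 6 * Q u u v v - 4 * Q u v v v + Q v v v v.
Proof.
have Q0 b c d : Q 0 b c d = 0 by apply: (addrI (Q 0 b c d)); rewrite -Q_addl !addr0.
have Q_oppl a b c d : Q (- a) b c d = - Q a b c d.
  by apply/eqP; rewrite -addr_eq0 -Q_addl addNr Q0.
have Q_oppm a b c d : Q a (- b) c d = - Q a b c d by rewrite Q_sym12 Q_oppl Q_sym12.
have Q_oppr a b c d : Q a b (- c) d = - Q a b c d by rewrite Q_sym23 Q_oppm Q_sym23.
have Q_oppe a b c d : Q a b c (- d) = - Q a b c d by rewrite Q_sym34 Q_oppr Q_sym34.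
rewrite quadrilinear_expandD !Q_oppl !Q_oppm !Q_oppr !Q_oppe; ring.
Qed.

End SymmetricQuadrilinear.

Section SubsetSums.

Variable G : finZmodType.

Definition nsubsets_sum (A : {set G}) (m : nat) (z : G) : nat :=
  #|[set X : {set G} | [&& X \subset A, #|X| == m & \sum_(x in X) x == z]]|.

(* Double count the pairs (X, x) with x \in X: the X containing x are the
   x |: Y with Y a subset of A :\ x of sum z - x. *)
Lemma nsubsets_sum_rec (A : {set G}) m z :
  (m.+1 * nsubsets_sum A m.+1 z = \sum_(x in A) nsubsets_sum (A :\ x) m (z - x)%R)%N.
Proof.
rewrite /nsubsets_sum; set F := [set X : {set G} | _].
have -> : (m.+1 * #|F| = \sum_(X in F) \sum_(x in A) (x \in X))%N.
  rewrite mulnC -sum_nat_const; apply: eq_bigr => X; rewrite inE.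
  case/and3P => sXA /eqP <- _; rewrite -sum1_card big_mkcond [RHS]big_mkcond /=.
  by apply: eq_bigr => x _; case xX: (x \in X); [rewrite (subsetP sXA) | case: (x \in A)].
rewrite exchange_big /=; apply: eq_bigr => x xA; rewrite -big_mkcondr sum1_card.
set F' := [set Y : {set G} | _].
have notin_F' Y : Y \in F' -> x \notin Y.
  by rewrite inE => /and3P [sYA _ _]; apply/negP => /(subsetP sYA); rewrite !inE eqxx.
have E : [pred X in F | x \in X] =i [set x |: Y | Y in F'].
  move=> X; rewrite !inE; apply/idP/imsetP => [/andP [] /and3P [sXA /eqP cX /eqP sX] xX|].
    exists (X :\ x); last by rewrite setD1K.
    rewrite inE setSD //= -[m]/(m.+1.-1) -cX (cardsD1 x X) xX eqxx /=.
    by rewrite -sX (big_setD1 _ xX) /= addrAC subrr add0r.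
  case=> Y FY ->; have xY := notin_F' Y FY.
  move: FY; rewrite inE => /and3P [sYA /eqP cY /eqP sY].
  rewrite setU11 cardsU1 xY cY (big_setU1 _ xY) /= sY addrC subrK !eqxx !andbT.
  by apply/subsetP => y /setU1P [-> //|/(subsetP sYA)]; rewrite !inE => /andP [].
rewrite (eq_card E) card_in_imset // => Y1 Y2 /notin_F' x1 /notin_F' x2 e.
by rewrite -(setU1K x1) -(setU1K x2) e.
Qed.

Lemma nsubsets_sum0 (A : {set G}) z : nsubsets_sum A 0 z = (z == 0).
Proof.
rewrite /nsubsets_sum; case: eqP => [->|nz].
  rewrite (_ : [set X | _] = [set set0]) ?cards1 //; apply/setP => X; rewrite !inE.
  apply/and3P/eqP => [[_ /eqP/cards0_eq -> //]|->].
  by rewrite sub0set cards0 big_set0.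
apply/eqP; rewrite cards_eq0; apply/eqP/setP => X; rewrite !inE.
by apply/and3P => [[_ /eqP/cards0_eq ->]]; rewrite big_set0 => /eqP z0; apply: nz.
Qed.

Lemma nsubsets_sum1 (A : {set G}) z : nsubsets_sum A 1 z = (z \in A).
Proof.
rewrite -[LHS]mul1n nsubsets_sum_rec.
under eq_bigr do rewrite nsubsets_sum0 subr_eq0 eq_sym.
case zA: (z \in A); last first.
  by rewrite big1 // => x xA; case: eqP => // exz; rewrite -exz xA in zA.
by rewrite (big_setD1 z zA) eqxx big1 //= => x /setD1P [/negbTE ->].
Qed.

Section Char2.

Hypothesis addxx : forall x : G, x + x = 0.

Lemma oppr_char2 (x : G) : - x = x.
Proof. by rewrite -[RHS]subr0 -(addxx x) opprD addrA subrr add0r. Qed.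

Lemma addrKA_char2 (x y : G) : x + (x + y) = y.
Proof. by rewrite addrA addxx add0r. Qed.

Lemma addr_eq_char2 (x y z : G) : (x + y == z) = (x == z + y).
Proof. by rewrite -subr_eq oppr_char2. Qed.

Lemma addr_eql_char2 (x y : G) : (x + y == x) = (y == 0).
Proof. by rewrite -{2}(addr0 x) (inj_eq (addrI x)). Qed.

Lemma nsubsets_sum2 (A : {set G}) z : z != 0 ->
  (2 * nsubsets_sum A 2 z = \sum_(x in A) ((x + z)%R \in A))%N.
Proof.
move=> z0; rewrite nsubsets_sum_rec; apply: eq_bigr => x _.
by rewrite nsubsets_sum1 oppr_char2 addrC !inE addr_eql_char2 (negbTE z0).
Qed.

Lemma nsubsets_sum3_zero (A : {set G}) : 0 \notin A ->
  (6 * nsubsets_sum A 3 0%R = \sum_(x in A) \sum_(y in A) ((x + y)%R \in A))%N.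
Proof.
move=> A0; rewrite (_ : 6 = 2 * 3)%N // -mulnA nsubsets_sum_rec big_distrr /=.
apply: eq_bigr => x xA; have x0 : x != 0 by apply: contraNneq A0 => <-.
rewrite sub0r oppr_char2 nsubsets_sum2 // (big_setD1 x xA) /= addxx (negbTE A0).
apply: eq_bigr => y /setD1P [yx yA].
by rewrite [y + x]addrC !inE addr_eql_char2 (negbTE (contraNneq _ A0)) // => <-.
Qed.

Lemma sum_mem_addr_pair (A : {set G}) x y : x \in A -> y \in A -> x != y ->
  (\sum_(u in A) ((u + (x + y))%R \in A) = (2 * nsubsets_sum (A :\ x :\ y) 2 (x + y)%R).+2)%N.
Proof.
move=> xA yA xy; have yAx : y \in A :\ x by rewrite !inE eq_sym xy.
have xy0 : x + y != 0 by rewrite addr_eq_char2 add0r.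
rewrite nsubsets_sum2 // (big_setD1 x xA) (big_setD1 y yAx) /=.
rewrite addrKA_char2 yA [y + _]addrCA addxx addr0 xA !add1n; congr _.+2.
apply: eq_bigr => u /setD1P [uy /setD1P [ux uA]].
rewrite !inE !addr_eq_char2 addrKA_char2 [y + _]addrCA addxx addr0.
by rewrite (negbTE ux) (negbTE uy).
Qed.

(* Among the ordered triples (x, y, u) of A with u + x + y in A, those with
   x = y contribute |A|^2 and those with u \in {x, y} contribute 2|A|(|A| - 1). *)
Lemma nsubsets_sum4_zero (A : {set G}) : 0 \notin A ->
  (24 * nsubsets_sum A 4 0%R + 3 * #|A| ^ 2 =
   \sum_(x in A) \sum_(y in A) \sum_(u in A) ((u + (x + y))%R \in A) + 2 * #|A|)%N.
Proof.
move=> A0.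
have -> : (24 * nsubsets_sum A 4 0%R = \sum_(x in A) \sum_(y in A :\ x)
            2 * nsubsets_sum (A :\ x :\ y) 2 (x + y)%R)%N.
  rewrite (_ : 24 = 2 * 3 * 4)%N // -mulnA nsubsets_sum_rec big_distrr /=.
  apply: eq_bigr => x _; rewrite sub0r oppr_char2 -mulnA nsubsets_sum_rec big_distrr.
  by apply: eq_bigr => y _; rewrite oppr_char2.
rewrite (_ : 3 * #|A| ^ 2 = #|A| * (3 * #|A|))%N; last by ring.
rewrite (mulnC 2%N) -!sum_nat_const -!big_split; apply: eq_bigr => x xA /=.
have pairs : (\sum_(y in A :\ x) \sum_(u in A) ((u + (x + y))%R \in A) =
    \sum_(y in A :\ x) 2 * nsubsets_sum (A :\ x :\ y) 2 (x + y)%R + #|A :\ x| * 2)%N.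
  rewrite -sum_nat_const -big_split; apply: eq_bigr => y /setD1P [yx yA] /=.
  by rewrite sum_mem_addr_pair // 1?eq_sym // addn2.
have diag : (\sum_(u in A) ((u + (x + x))%R \in A) = #|A|)%N.
  by rewrite -sum1_card; apply: eq_bigr => u uA; rewrite addxx addr0 uA.
rewrite (big_setD1 x xA) /= pairs diag.
by have := cardsD1 x A; rewrite xA add1n => ->; ring.
Qed.

Lemma nsubsets_sum2_setD (W A : {set G}) z : z != 0 -> A \subset W ->
  (forall x, (x + z \in W) = (x \in W)) ->
  (2 * nsubsets_sum (W :\: A) 2 z + 2 * #|A| = #|W| + 2 * nsubsets_sum A 2 z)%N.
Proof.
move=> z0 sAW Wz; rewrite !nsubsets_sum2 //.
have card_split (B : {set G}) :
    #|B| = (\sum_(x in B) ((x + z)%R \in B) + \sum_(x in B) ((x + z)%R \notin B))%N.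
  by rewrite -big_split -sum1_card; apply: eq_bigr => x _; case: (_ \in B).
(* x |-> x + z maps the elements of A leaving A onto those of W :\: A leaving
   W :\: A. *)
have leaving_eq : (\sum_(x in A) ((x + z)%R \notin A) =
                   \sum_(x in W :\: A) ((x + z)%R \notin W :\: A))%N.
  rewrite [RHS](reindex_inj (addIr z)) big_mkcond [RHS]big_mkcond /=; apply: eq_bigr => x _.
  rewrite -addrA addxx addr0 !inE Wz.
  case: (boolP (x \in A)) => xA /=; first by rewrite (subsetP sAW x xA) andbT; case: (_ \in A).
  by case: (x \in W); rewrite ?andbF ?andbT //; case: (_ \in A).
have := cardsID A W; rewrite (setIidPr sAW) (card_split A) (card_split (W :\: A)) leaving_eq.
lia.
Qed.

Lemma nsubsets_sum2_span_compl (a c : G) (S : {set G}) :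
  a != 0 -> c != 0 -> a != c -> S \subset ~: [set 0; a; c; a + c] ->
  let T := ~: [set 0; a; c; a + c] :\: S in
  (nsubsets_sum S 2 a + nsubsets_sum S 2 (a + c)%R + #|G| =
   nsubsets_sum T 2 a + nsubsets_sum T 2 (a + c)%R + 2 * #|S| + 4)%N.
Proof.
move=> a0 c0 ac sSK T; set K := [set 0; a; c; a + c].
have cardK : #|K| = 4%N.
  rewrite /K -setUA -setUA !cardsU1 cards1 !inE !(eq_sym 0) (negbTE a0) (negbTE c0).
  rewrite addr_eq_char2 add0r (negbTE ac) eq_sym addr_eql_char2 (negbTE c0).
  by rewrite eq_sym addrC addr_eql_char2 (negbTE a0).
have compl_stable z : (forall y, y \in K -> y + z \in K) ->
    forall x, (x + z \in ~: K) = (x \in ~: K).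
  move=> Kz x; rewrite !in_setC; congr negb; apply/idP/idP => [xzK|xK]; last exact: Kz.
  by have := Kz _ xzK; rewrite -addrA addxx addr0.
have Ka : forall x, (x + a \in ~: K) = (x \in ~: K).
  apply: compl_stable => y; rewrite !inE -!orbA => /or4P [] /eqP ->.
  - by rewrite add0r eqxx !orbT.
  - by rewrite addxx eqxx.
  - by rewrite addrC eqxx !orbT.
  - by rewrite addrAC addxx add0r eqxx !orbT.
have Kac : forall x, (x + (a + c) \in ~: K) = (x \in ~: K).
  apply: compl_stable => y; rewrite !inE -!orbA => /or4P [] /eqP ->.
  - by rewrite add0r eqxx !orbT.
  - by rewrite addrKA_char2 eqxx !orbT.
  - by rewrite addrCA addxx addr0 eqxx !orbT.
  - by rewrite addxx eqxx.
have cardKC : (4 + #|~: K| = #|G|)%N by rewrite -cardK cardsC.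
have Ta : (2 * nsubsets_sum T 2 a + 2 * #|S| = #|~: K| + 2 * nsubsets_sum S 2 a)%N.
  exact: nsubsets_sum2_setD.
have Tac : (2 * nsubsets_sum T 2 (a + c)%R + 2 * #|S| =
            #|~: K| + 2 * nsubsets_sum S 2 (a + c)%R)%N.
  by apply: nsubsets_sum2_setD; rewrite // addr_eq_char2 add0r.
lia.
Qed.

Definition indicator (A : {set G}) : {ffun G -> int} := [ffun x => (x \in A : nat)%:Z].

Definition form3 (f g h : {ffun G -> int}) : int :=
  \sum_x \sum_y f x * g y * h (x + y).

Definition form4 (f g h k : {ffun G -> int}) : int :=
  \sum_x \sum_y \sum_z f x * g y * h z * k (x + y + z).

Lemma sum_indicator (A : {set G}) (F : G -> int) :
  \sum_x indicator A x * F x = \sum_(x in A) F x.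
Proof.
rewrite [RHS]big_mkcond; apply: eq_bigr => x _.
by rewrite ffunE; case: (x \in A); rewrite ?mul1r ?mul0r.
Qed.

Lemma sum_indicator1 (A : {set G}) : \sum_x indicator A x = #|A|%:Z.
Proof.
by rewrite -(eq_bigr _ (fun x _ => mulr1 (indicator A x))) sum_indicator sumr_const natz.
Qed.

Lemma sum_addr (F : G -> int) c : \sum_x F (x + c) = \sum_x F x.
Proof. by rewrite [RHS](reindex_inj (addIr c)). Qed.

Lemma form3_addl f f' g h : form3 (f + f') g h = form3 f g h + form3 f' g h.
Proof.
rewrite /form3 -big_split; apply: eq_bigr => x _; rewrite -big_split.
by apply: eq_bigr => y _; rewrite ffunE mulrDl mulrDl.
Qed.

Lemma form3_sym12 f g h : form3 f g h = form3 g f h.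
Proof.
rewrite /form3 exchange_big /=; apply: eq_bigr => x _; apply: eq_bigr => y _.
by rewrite [y + x]addrC [f y * _]mulrC.
Qed.

Lemma form3_sym23 f g h : form3 f g h = form3 f h g.
Proof.
rewrite /form3; apply: eq_bigr => x _; rewrite [RHS](reindex_inj (addrI x)) /=.
by apply: eq_bigr => y _; rewrite addrA addxx add0r -!mulrA [h _ * _]mulrC.
Qed.

Lemma form3_1l g h : form3 1 g h = (\sum_x g x) * (\sum_x h x).
Proof.
rewrite /form3 exchange_big mulr_suml; apply: eq_bigr => y _.
rewrite -(sum_addr h y) mulr_sumr; apply: eq_bigr => x _.
by rewrite ffunE mul1r.
Qed.

Lemma form3_indicator0l g h : form3 (indicator [set 0]) g h = \sum_x g x * h x.
Proof.
rewrite /form3 (eq_bigr (fun x => indicator [set 0] x * \sum_y g y * h (x + y))).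
  by rewrite sum_indicator big_set1; apply: eq_bigr => y _; rewrite add0r.
by move=> x _; rewrite mulr_sumr; apply: eq_bigr => y _; rewrite mulrA.
Qed.

Lemma form4_addl f f' g h k : form4 (f + f') g h k = form4 f g h k + form4 f' g h k.
Proof.
rewrite /form4 -big_split; apply: eq_bigr => x _; rewrite -big_split.
apply: eq_bigr => y _; rewrite -big_split.
by apply: eq_bigr => z _; rewrite ffunE !mulrDl.
Qed.

Lemma form4_sym12 f g h k : form4 f g h k = form4 g f h k.
Proof.
rewrite /form4 exchange_big /=; apply: eq_bigr => x _; apply: eq_bigr => y _.
by apply: eq_bigr => z _; rewrite [y + x]addrC [g x * f y]mulrC.
Qed.

Lemma form4_sym23 f g h k : form4 f g h k = form4 f h g k.
Proof.
rewrite /form4; apply: eq_bigr => x _; rewrite exchange_big /=.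
apply: eq_bigr => y _; apply: eq_bigr => z _.
by rewrite addrAC; congr (_ * _); rewrite -!mulrA [g z * _]mulrC.
Qed.

Lemma form4_sym34 f g h k : form4 f g h k = form4 f g k h.
Proof.
rewrite /form4; apply: eq_bigr => x _; apply: eq_bigr => y _.
rewrite [RHS](reindex_inj (addrI (x + y))) /=; apply: eq_bigr => z _.
by rewrite addrA addxx add0r -!mulrA [h _ * _]mulrC.
Qed.

Lemma form4_1l g h k :
  form4 1 g h k = (\sum_x g x) * (\sum_x h x) * (\sum_x k x).
Proof.
rewrite /form4 exchange_big /= -mulrA mulr_suml; apply: eq_bigr => y _.
rewrite exchange_big /= mulr_suml mulr_sumr; apply: eq_bigr => z _.
rewrite -(sum_addr k (y + z)) !mulr_sumr; apply: eq_bigr => x _.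
by rewrite ffunE mul1r addrA !mulrA.
Qed.

Lemma form4_indicator0l g h k : form4 (indicator [set 0]) g h k = form3 g h k.
Proof.
rewrite /form4 (eq_bigr (fun x => indicator [set 0] x *
  \sum_y \sum_z g y * h z * k (x + y + z))).
  rewrite sum_indicator big_set1; apply: eq_bigr => y _.
  by apply: eq_bigr => z _; rewrite add0r.
move=> x _; rewrite mulr_sumr; apply: eq_bigr => y _.
by rewrite mulr_sumr; apply: eq_bigr => z _; rewrite !mulrA.
Qed.

Lemma sum_indicator_sqr (A : {set G}) :
  \sum_x indicator A x * indicator A x = #|A|%:Z.
Proof.
rewrite sum_indicator -sum_indicator1 [LHS]big_mkcond /=.
by apply: eq_bigr => x _; rewrite ffunE; case: (x \in A).
Qed.

Lemma form3_indicator (A : {set G}) : 0 \notin A ->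
  form3 (indicator A) (indicator A) (indicator A) = (6 * nsubsets_sum A 3 0)%:Z.
Proof.
move=> A0; rewrite nsubsets_sum3_zero // -natz natr_sum /form3 -sum_indicator.
apply: eq_bigr => x _; rewrite natr_sum -sum_indicator mulr_sumr.
by apply: eq_bigr => y _; rewrite mulrA [indicator A (x + y)]ffunE natz.
Qed.

Lemma form4_indicator (A : {set G}) : 0 \notin A ->
  form4 (indicator A) (indicator A) (indicator A) (indicator A) =
  (24 * nsubsets_sum A 4 0)%:Z + 3 * #|A|%:Z ^+ 2 - 2 * #|A|%:Z.
Proof.
move=> A0; have := nsubsets_sum4_zero A0 => /(congr1 Posz).
have -> : form4 (indicator A) (indicator A) (indicator A) (indicator A) =
  (\sum_(x in A) \sum_(y in A) \sum_(u in A) ((u + (x + y))%R \in A))%N%:Z.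
  rewrite -natz natr_sum /form4 -sum_indicator.
  apply: eq_bigr => x _; rewrite natr_sum -sum_indicator mulr_sumr.
  apply: eq_bigr => y _; rewrite natr_sum -sum_indicator !mulr_sumr.
  by apply: eq_bigr => z _; rewrite !mulrA [indicator A (x + y + z)]ffunE natz addrC.
by rewrite !PoszD !PoszM; lia.
Qed.

Lemma indicator_setD_nonzero (S : {set G}) : 0 \notin S ->
  indicator ([set x | x != 0] :\: S) = 1 - (indicator [set 0] + indicator S).
Proof.
move=> S0; apply/ffunP => x; rewrite !ffunE !inE.
by case: eqP => [->|_]; rewrite ?(negbTE S0) //=; case: (x \in S).
Qed.

Lemma sum_ffun1 : \sum_x (1 : {ffun G -> int}) x = #|G|%:Z.
Proof. by under eq_bigr do rewrite ffunE; rewrite sumr_const natz. Qed.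

Lemma sum_indicator0D (S : {set G}) :
  \sum_x (indicator [set 0] + indicator S) x = 1 + #|S|%:Z.
Proof.
by under eq_bigr do rewrite ffunE; rewrite big_split /= !sum_indicator1 cards1.
Qed.

Lemma form3_indicator0D (S : {set G}) : 0 \notin S ->
  let v := indicator [set 0] + indicator S in
  form3 v v v = 1 + 3 * #|S|%:Z + form3 (indicator S) (indicator S) (indicator S).
Proof.
move=> S0 v; rewrite (trilinear_expandD form3_addl form3_sym12 form3_sym23).
rewrite !form3_indicator0l !sum_indicator_sqr sum_indicator big_set1 ffunE.
by rewrite (negbTE S0) cards1 mulr0 addr0.
Qed.

Lemma form4_indicator0D (S : {set G}) : 0 \notin S ->
  let v := indicator [set 0] + indicator S in
  form4 v v v v = 1 + 6 * #|S|%:Z + 4 * form3 (indicator S) (indicator S) (indicator S)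
                  + form4 (indicator S) (indicator S) (indicator S) (indicator S).
Proof.
move=> S0 v.
rewrite (quadrilinear_expandD form4_addl form4_sym12 form4_sym23 form4_sym34).
rewrite !form4_indicator0l !form3_indicator0l !sum_indicator_sqr sum_indicator big_set1 ffunE.
by rewrite (negbTE S0) cards1 mulr0 addr0.
Qed.

Lemma card_setD_nonzero (S : {set G}) : 0 \notin S ->
  #|[set x | x != 0] :\: S|%:Z = #|G|%:Z - 1 - #|S|%:Z.
Proof.
move=> S0; rewrite -[LHS]sum_indicator1 indicator_setD_nonzero //.
have sumB (f g : {ffun G -> int}) : \sum_x (f - g) x = \sum_x f x - \sum_x g x.
  by rewrite -sumrB; apply: eq_bigr => x _; rewrite !ffunE.
by rewrite sumB sum_ffun1 sum_indicator0D opprD addrA.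
Qed.

Lemma nsubsets_sum3_compl_mul (S : {set G}) : 0 \notin S ->
  6 * (nsubsets_sum S 3 0 + nsubsets_sum ([set x | x != 0] :\: S) 3 0)%:Z =
  (#|G|%:Z - 1) * (#|G|%:Z - 2) - 3 * #|S|%:Z * (#|G|%:Z - 1 - #|S|%:Z).
Proof.
move=> S0; have T0 : 0 \notin [set x | x != 0] :\: S by rewrite !inE eqxx andbF.
have := form3_indicator T0.
rewrite (indicator_setD_nonzero S0) (trilinear_expandB form3_addl form3_sym12 form3_sym23).
rewrite !form3_1l sum_ffun1 sum_indicator0D form3_indicator0D // form3_indicator //.
by rewrite PoszD; lia.
Qed.

(* The divisions in these constants are exact. *)
Definition total_zero_sum3 (M s : int) : int :=
  divz ((M - 1) * (M - 2) - 3 * s * (M - 1 - s)) 6.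

Lemma nsubsets_sum3_compl (S : {set G}) : 0 \notin S ->
  (nsubsets_sum S 3 0 + nsubsets_sum ([set x | x != 0] :\: S) 3 0)%:Z =
  total_zero_sum3 #|G|%:Z #|S|%:Z.
Proof. by move=> S0; rewrite /total_zero_sum3 -nsubsets_sum3_compl_mul // mulKz. Qed.

Definition excess_zero_sum4 (M s : int) : int :=
  let t := M - 1 - s in
  divz ((s - t) * (s ^+ 2 + t ^+ 2) - 4 * s ^+ 2 + 2 * s * t + 3 * s + t) 24.

Lemma nsubsets_sum4_compl (S : {set G}) : 0 \notin S ->
  (nsubsets_sum S 4 0)%:Z =
  (nsubsets_sum ([set x | x != 0] :\: S) 4 0)%:Z +
  (nsubsets_sum ([set x | x != 0] :\: S) 3 0)%:Z + excess_zero_sum4 #|G|%:Z #|S|%:Z.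
Proof.
move=> S0; set T := [set x | x != 0] :\: S; have T0 : 0 \notin T by rewrite !inE eqxx andbF.
have := form4_indicator T0.
rewrite {1}/T (indicator_setD_nonzero S0).
rewrite (quadrilinear_expandB form4_addl form4_sym12 form4_sym23 form4_sym34).
rewrite !form4_1l sum_ffun1 sum_indicator0D form4_indicator0D // form4_indicator //.
rewrite form3_indicator // card_setD_nonzero //.
have := nsubsets_sum3_compl_mul S0; rewrite -/T.
move=> E3 E4; rewrite /excess_zero_sum4 /=.
rewrite [X in divz X _](_ : _ = 24 * ((nsubsets_sum S 4 0)%:Z - (nsubsets_sum T 4 0)%:Z
                                     - (nsubsets_sum T 3 0)%:Z)).
  by rewrite mulKz //; ring.
by rewrite !expr2 in E4 *; move: E3 E4; move: #|G| #|S| => M s; lia.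
Qed.

End Char2.

End SubsetSums.

Lemma addvv (r : nat) (v : vec r) : v + v = 0.
Proof. by apply/rowP => i; rewrite !mxE addrr_pchar2 // pchar_Fp. Qed.

Lemma row_free_comb_eq0 (F : fieldType) k m (A : 'M[F]_(k, m)) (c : 'I_k -> F) :
  row_free A -> \sum_i c i *: row i A = 0 -> forall i, c i = 0.
Proof.
move=> freeA comb0 i.
have := row_free_inj freeA (x1 := \row_j c j) (x2 := 0).
rewrite mul0mx mulmx_sum_row; under eq_bigr do rewrite mxE.
by move=> /(_ comb0) /rowP /(_ i); rewrite !mxE.
Qed.

Lemma row_free_addF2_neq k m (A : 'M['F_2]_(k, m)) i j l :
  row_free A -> i != j -> i != l -> j != l -> row i A + row j A != row l A.
Proof.
move=> freeA ij il jl; apply/eqP => e.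
have := row_free_comb_eq0 (c := fun p => (p \in [set i; j; l] : nat)%:R) freeA.
have -> : \sum_p (p \in [set i; j; l] : nat)%:R *: row p A = \sum_(p in [set i; j; l]) row p A.
  rewrite [RHS]big_mkcond; apply: eq_bigr => p _.
  by case: (_ \in _); rewrite ?scale1r ?scale0r.
rewrite -setUA big_setU1 ?big_setU1 ?big_set1 ?inE ?negb_or ?ij ?il ?jl //=.
rewrite addrA e addvv => /(_ erefl i) /eqP.
by rewrite !inE eqxx oner_eq0.
Qed.

Lemma cnt_set1 (r : nat) (A : {set vec r}) m z : cnt A m [set z] = nsubsets_sum A m z.
Proof. by apply: eq_card => X; rewrite !inE. Qed.

Lemma cnt_set2 (r : nat) (A : {set vec r}) m z1 z2 : z1 != z2 ->
  cnt A m [set z1; z2] = (nsubsets_sum A m z1 + nsubsets_sum A m z2)%N.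
Proof.
move=> z12; rewrite /cnt /nsubsets_sum.
set F1 := [set X | _ & _ && (_ == z1)]; set F2 := [set X | _ & _ && (_ == z2)].
have disjF : F1 :&: F2 = set0.
  apply/setP => X; rewrite !inE; apply/negP => /andP [/and3P [_ _ /eqP e1]].
  by case/and3P => _ _ /eqP e2; move: z12; rewrite -e1 -e2 eqxx.
transitivity #|F1 :|: F2|; last by rewrite cardsU disjF cards0 subn0.
by apply: eq_card => X; rewrite !inE -andb_orr -andb_orr.
Qed.

Lemma cnt_span_compl (r : nat) (a c : vec r) (X : {set vec r}) :
  a != 0 -> c != 0 -> a != c -> X \subset ~: [set 0; a; c; a + c] ->
  (cnt X 2 [set a; a + c])%:Z =
  (cnt (~: [set 0; a; c; a + c] :\: X) 2 [set a; a + c])%:Z + 2 * #|X|%:Z + 4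
  - #|vec r|%:Z.
Proof.
move=> a0 c0 ac sXK.
have aac : a != a + c by rewrite eq_sym addr_eql_char2 // => v; exact: addvv.
set T := ~: [set 0; a; c; a + c] :\: X.
have : (nsubsets_sum X 2 a + nsubsets_sum X 2 (a + c)%R + #|vec r| =
        nsubsets_sum T 2 a + nsubsets_sum T 2 (a + c)%R + 2 * #|X| + 4)%N.
  exact: (@nsubsets_sum2_span_compl (vec r) (@addvv r) a c X a0 c0 ac sXK).
by rewrite !cnt_set2 //; lia.
Qed.

Lemma bsetP (r : nat) (b : nat -> vec r) lo hi x :
  reflect (exists2 i, (lo <= i <= hi)%N & x = b i) (x \in bset b lo hi).
Proof.
rewrite /bset inE; apply: (iffP mapP) => [[i]|[i]].
  by rewrite mem_index_iota ltnS => h ->; exists i.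
by move=> h ->; exists i; rewrite // mem_index_iota ltnS.
Qed.

Lemma bset_cons (r : nat) (b : nat -> vec r) lo hi :
  (lo <= hi)%N -> bset b lo hi = b lo |: bset b lo.+1 hi.
Proof.
by move=> le_lo_hi; apply/setP => x; rewrite /bset !inE /index_iota subSn // subSS.
Qed.

Lemma setD_span12 (r : nat) (b : nat -> vec r) n :
  Delta r :\: (b 2 |: bset b 4 n) :\: [set b 1; b 1 + b 2] =
  ~: [set 0; b 1; b 2; b 1 + b 2] :\: bset b 4 n.
Proof.
apply/setP => x; rewrite !inE.
by case: (x == 0); case: (x == b 1); case: (x == b 2); case: (x == b 1 + b 2);
   case: (x \in [seq b i | i <- _]).
Qed.

Lemma setD_span34 (r : nat) (b : nat -> vec r) n : (4 <= n)%N ->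
  Delta r :\: (b 2 |: bset b 4 n) :\: [set b 3; b 3 + b 4] =
  ~: [set 0; b 3; b 4; b 3 + b 4] :\: (b 2 |: bset b 5 n).
Proof.
move=> n4; apply/setP => x; rewrite bset_cons // !inE.
by case: (x == 0); case: (x == b 2); case: (x == b 3); case: (x == b 4);
   case: (x == b 3 + b 4); case: (x \in [seq b i | i <- _]).
Qed.

Section Design.

Variables (n r : nat) (b : nat -> vec r).
Hypothesis b_Delta : forall i, (1 <= i <= n)%N -> b i \in Delta r.
Hypothesis b_inj : {in index_iota 1 n.+1 &, injective b}.

Lemma design_neq0 i : (1 <= i <= n)%N -> b i != 0.
Proof. by move/b_Delta; rewrite inE. Qed.

Lemma design_eq i j : (1 <= i <= n)%N -> (1 <= j <= n)%N -> (b i == b j) = (i == j).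
Proof.
move=> hi hj; apply/eqP/eqP => [|-> //].
by apply: b_inj; rewrite mem_index_iota ltnS.
Qed.

Lemma card_bset lo hi : (1 <= lo)%N -> (hi <= n)%N -> #|bset b lo hi| = (hi.+1 - lo)%N.
Proof.
move=> lo1 hin; rewrite /bset cardsE (card_uniqP _) ?size_map ?size_iota //.
rewrite map_inj_in_uniq ?iota_uniq // => i j; rewrite !mem_index_iota => ri rj.
by apply: b_inj; rewrite mem_index_iota; lia.
Qed.

Lemma b2_notin_bset lo : (2 < lo)%N -> b 2 \notin bset b lo n.
Proof.
move=> lo2; apply/bsetP => [[i hi /eqP]]; rewrite eq_sym design_eq; lia.
Qed.

Hypothesis n4 : (4 <= n)%N.

Lemma design_zero_notin : 0 \notin b 2 |: bset b 4 n.
Proof.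
rewrite in_setU1 negb_or eq_sym design_neq0 //=; last by lia.
by apply/bsetP => [[i hi /eqP]]; rewrite eq_sym (negbTE (design_neq0 _)) //; lia.
Qed.

Lemma card_design : #|b 2 |: bset b 4 n| = (n - 2)%N.
Proof. by rewrite cardsU1 b2_notin_bset // card_bset //; lia. Qed.

Hypothesis b_free : row_free (\matrix_(i < 4) b i.+1).

Lemma design_add12_neq4 : b 1 + b 2 != b 4.
Proof.
have := row_free_addF2_neq (i := ord0) (j := inord 1) (l := inord 3) b_free.
by rewrite !rowK /= !inordK //; apply; rewrite -val_eqE /= ?inordK.
Qed.

Lemma design_add34_neq2 : b 3 + b 4 != b 2.
Proof.
have := row_free_addF2_neq (i := inord 2) (j := inord 3) (l := inord 1) b_free.
by rewrite !rowK /= !inordK //; apply; rewrite -val_eqE /= ?inordK.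
Qed.

Hypothesis h12 : b 1 + b 2 \notin bset b 5 n.
Hypothesis h34 : b 3 + b 4 \notin bset b 5 n.

Lemma subset_compl_span12 : bset b 4 n \subset ~: [set 0; b 1; b 2; b 1 + b 2].
Proof.
apply/subsetP => _ /bsetP [i hi ->].
have [bi1 bi2] : b i != b 1 /\ b i != b 2 by rewrite !design_eq; lia.
rewrite !inE (negbTE (design_neq0 _)) ?(negbTE bi1) ?(negbTE bi2) /=; last by lia.
have [-> | hi5] : i = 4%N \/ (5 <= i <= n)%N by lia.
  by rewrite eq_sym design_add12_neq4.
by apply: contraNneq h12 => <-; apply/bsetP; exists i.
Qed.

Lemma subset_compl_span34 : b 2 |: bset b 5 n \subset ~: [set 0; b 3; b 4; b 3 + b 4].
Proof.
apply/subsetP => _ /setU1P [->|/bsetP [i hi ->]].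
  have b2nz : b 2 != 0 by apply: design_neq0; lia.
  have [b23 b24] : b 2 != b 3 /\ b 2 != b 4 by rewrite !design_eq; lia.
  by rewrite !inE (negbTE b2nz) (negbTE b23) (negbTE b24) eq_sym (negbTE design_add34_neq2).
have [bi3 bi4] : b i != b 3 /\ b i != b 4 by rewrite !design_eq; lia.
rewrite !inE (negbTE (design_neq0 _)) ?(negbTE bi3) ?(negbTE bi4) /=; last by lia.
by apply: contraNneq h34 => <-; apply/bsetP; exists i.
Qed.

Lemma design_cnt_pairs :
  let T := Delta r :\: (b 2 |: bset b 4 n) in
  let Z12 := [set b 1; b 1 + b 2] in
  let Z34 := [set b 3; b 3 + b 4] in
  (cnt (bset b 4 n) 2 Z12 + cnt (b 2 |: bset b 5 n) 2 Z34)%:Z =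
  2 * (2 * (n - 3)%N%:Z + 4 - #|vec r|%:Z) +
  (cnt (T :\: Z12) 2 Z12)%:Z + (cnt (T :\: Z34) 2 Z34)%:Z.
Proof.
move=> T Z12 Z34; rewrite /T /Z12 /Z34 setD_span12 setD_span34 // PoszD.
have nz k : (1 <= k <= 4)%N -> b k != 0 by move=> hk; apply: design_neq0; lia.
have [b12 b34] : b 1 != b 2 /\ b 3 != b 4 by rewrite !design_eq; lia.
rewrite (cnt_span_compl (nz 1%N _) (nz 2%N _) b12 subset_compl_span12) //.
rewrite (cnt_span_compl (nz 3%N _) (nz 4%N _) b34 subset_compl_span34) //.
rewrite cardsU1 b2_notin_bset // !card_bset //.
have -> : (n.+1 - 4 = n - 3)%N by lia.
have -> : (true + (n.+1 - 5) = n - 3)%N by lia.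
ring.
Qed.

End Design.

Theorem theorem4 (n r : nat) :
  exists c1 c2 c3 : int,
  forall b : nat -> 'rV['F_2]_r,
    (4 <= n)%N ->
    (forall i, (1 <= i <= n)%N -> b i \in Delta r) ->
    {in index_iota 1 n.+1 &, injective b} ->
    \rank (\matrix_(i < n) b i.+1) = r ->
    let Tt := Delta r :\: (b 2%N |: bset b 4 n) in
    ((cnt (b 2%N |: bset b 4 n) 3 [set 0])%:Z = c1 - (cnt Tt 3 [set 0])%:Z) /\
    ((cnt (b 2%N |: bset b 4 n) 4 [set 0])%:Z
       = c2 + (cnt Tt 3 [set 0])%:Z + (cnt Tt 4 [set 0])%:Z) /\
    (row_free (\matrix_(i < 4) b i.+1) ->
     b 1%N + b 2%N \notin bset b 5 n ->
     b 3%N + b 4%N \notin bset b 5 n ->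
     let Z12 := [set b 1%N; b 1%N + b 2%N] in
     let Z34 := [set b 3%N; b 3%N + b 4%N] in
     (cnt (bset b 4 n) 2 Z12 + cnt (b 2%N |: bset b 5 n) 2 Z34)%:Z
       = c3 + (cnt (Tt :\: Z12) 2 Z12)%:Z + (cnt (Tt :\: Z34) 2 Z34)%:Z).
Proof.
exists (total_zero_sum3 #|vec r|%:Z (n - 2)%N%:Z),
       (excess_zero_sum4 #|vec r|%:Z (n - 2)%N%:Z),
       (2 * (2 * (n - 3)%N%:Z + 4 - #|vec r|%:Z)).
move=> b n4 b_Delta b_inj _ Tt.
have S0 := design_zero_notin b_Delta n4.
have cardS := card_design b_inj n4.
split; [|split].
- rewrite /Tt /Delta !cnt_set1 -cardS -(nsubsets_sum3_compl (@addvv r) S0).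
  by rewrite PoszD addrK.
- rewrite /Tt /Delta !cnt_set1 -cardS (nsubsets_sum4_compl (@addvv r) S0).
  ring.
by move=> b_free h12 h34; apply: design_cnt_pairs.
Qed.
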